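(* Let $m\ge 3$ and let $WC_m$ denote the fully whiskered $2m$-cycle graph. Then $M_2(WC_m)\simeq S^{2m-1}$.
   Context: The fully whiskered graph of a graph $G$ is obtained by attaching a leaf (a new vertex joined by one edge) to every vertex of $G$; $WC_m$ is the fully whiskered graph of the cycle on $2m$ vertices. A $2$-matching of a graph is a set of edges such that every vertex has degree at most $2$ in it. $M_2(G)$ is the simplicial complex whose vertices are the edges of $G$ and whose faces are the $2$-matchings of $G$. *)

From HB Require Import structures.
From mathcomp Require Import all_boot all_order all_algebra.
From mathcomp Require Import all_classical all_reals topology normedtype.
Import Order.TTheory GRing.Theory Num.Theory.
Import numFieldNormedType.Exports.
Local Open Scope ring_scope.

Definition edge_set (V : finType) (adj : rel V) : {set {set V}} :=
  [set [set x; y] | x in V, y in V & adj x y].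

Definition cycle_adj (n : nat) : rel 'I_n :=
  fun i j => (val j == (val i).+1 %% n)%N || (val i == (val j).+1 %% n)%N.

(* Fully whiskered graph W(G): vertices inl v (original) and inr v (the new
   leaf attached to v); edges are the edges of G plus one edge {v, leaf v}. *)
Definition whisker_adj (V : finType) (adj : rel V) : rel (V + V)%type :=
  fun a b => match a, b with
             | inl x, inl y => adj x y
             | inl x, inr y => x == y
             | inr x, inl y => x == y
             | inr _, inr _ => false
             end.

Definition WC_adj (m : nat) : rel ('I_(2 * m) + 'I_(2 * m))%type :=
  @whisker_adj _ (cycle_adj (2 * m)).

Definition two_matching (V : finType) (adj : rel V) (F : {set {set V}}) : bool :=
  (F \subset edge_set _ adj) && [forall v, #|[set e in F | v \in e]| <= 2]%N.

(* The simplicial complex M_2(G): its vertices are the edges of G (which are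
   elements of {set V}); its faces are the 2-matchings. *)
Definition M2 (V : finType) (adj : rel V) : {set {set {set V}}} :=
  [set F | two_matching _ adj F].

Local Open Scope classical_set_scope.

Definition realization (R : realType) (I : finType) (K : {set {set I}})
  : set {ptws I -> R} :=
  [set x | (forall i, 0 <= x i) /\ (\sum_(i : I) x i = 1) /\
           [set i | x i != 0]%SET \in K].

Definition unit_sphere (R : realType) (d : nat) : set {ptws 'I_d.+1 -> R} :=
  [set y | \sum_(i < d.+1) y i ^+ 2 = 1].

(* p, q : A -> A (maps of ambient spaces that map A into A) are homotopic
   through maps A -> A. *)
Definition homotopic_on (R : realType) (X : topologicalType) (A : set X)
  (p q : X -> X) : Prop :=
  exists H : (R * X)%type -> X,
    {within [set t : R | 0 <= t <= 1] `*` A, continuous H} /\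
    (forall t x, 0 <= t <= 1 -> A x -> A (H (t, x))) /\
    (forall x, A x -> H (0, x) = p x /\ H (1, x) = q x).

Definition homotopy_equivalent (R : realType) (X Y : topologicalType)
  (A : set X) (B : set Y) : Prop :=
  exists (f : X -> Y) (g : Y -> X),
    {within A, continuous f} /\ f @` A `<=` B /\
    {within B, continuous g} /\ g @` B `<=` A /\
    homotopic_on R X A (g \o f) id /\ homotopic_on R Y B (f \o g) id.

From HB Require Import structures.
From mathcomp Require Import all_boot all_order all_algebra.
From mathcomp Require Import all_classical all_reals topology normedtype.
Import numFieldNormedType.Exports.
From mathcomp Require Import zify lra realfun.
Import Order.TTheory GRing.Theory Num.Theory.

(* Write a_i and b_i for the weights of a point x of |M_2(WC)| on the cycle
   edge {i, i+1} and on the whisker at i (indices modulo the cycle length N).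
   A set of edges is a 2-matching iff it never contains the three edges at a
   cycle vertex j+1: cycle edges j, j+1 and the whisker at j+1.  The vector
   y_i = a_i - b_i - min(a_{i+1}, b_{i+1}) vanishes nowhere on |M_2(WC)|, so
   f x = y / |y|_2 lands in S^(N-1).  Conversely g z puts weight z_i^+ on
   cycle edge i and z_i^- on whisker i, normalised in l^1, and f (g z) = z.
   The signs of y are compatible with the 2-matching condition: adding to the
   support of x the cycle edges where y > 0 and the whiskers where y < 0 still
   gives a 2-matching.  It contains the support of every point of the segment
   from g (f x) to x, so the segment stays in |M_2(WC)| and g o f is
   homotopic to the identity. *)

Lemma card_sep_uniq {T : finType} {F : {set T}} {P : pred T} {s : seq T} :
  uniq s -> (forall e, e \in F -> P e = (e \in s)) ->
  #|[set e in F | P e]| = count (mem F) s.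
Proof.
move=> s_uniq PE.
have -> : [set e in F | P e] = [set e in [seq e <- s | e \in F]].
  apply/setP => e; rewrite !inE mem_filter.
  by case eF: (e \in F); rewrite //= PE.
by rewrite cardsE (card_uniqP (filter_uniq _ s_uniq)) size_filter.
Qed.

Lemma sum_indicator_mul (R : pzSemiRingType) (T : finType) (t : T) (c : R) :
  (\sum_(e : T) (e == t)%:R * c = c)%R.
Proof.
rewrite (bigD1 t) //= eqxx mul1r big1 ?addr0 // => e /negbTE ->.
by rewrite mul0r.
Qed.

Section WhiskeredCycle.
Context {n : nat} (n_gt1 : (1 < n)%N).
Local Notation N := n.+1.
Local Notation V := ('I_N + 'I_N)%type.
Local Notation WC := (whisker_adj _ (cycle_adj N)).

Lemma nat_of_ordS (j : 'I_N) :
  ordS j = (if j == n :> nat then 0 else j.+1)%N :> nat.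
Proof.
case: j => j /= lt_jN; case: eqP => [->|ne]; first exact: modnn.
by rewrite modn_small; lia.
Qed.

Lemma ordS_neq (j : 'I_N) : ordS j != j.
Proof.
apply/eqP => /(congr1 (@nat_of_ord _)); rewrite nat_of_ordS.
by case: eqP => j_n Sj_j; lia.
Qed.

Lemma ordS2_neq (j : 'I_N) : ordS (ordS j) != j.
Proof.
apply/eqP => /(congr1 (@nat_of_ord _)); rewrite !nat_of_ordS.
by case: (j =P n :> nat) => j_n; case: eqP => Sj_n SSj_j; lia.
Qed.

Lemma inl_eq_inr (i j : 'I_N) : (inl i == inr j :> V) = false.
Proof. by []. Qed.

Definition cycle_edge (j : 'I_N) : {set V} := [set inl j; inl (ordS j)].
Definition whisker_edge (j : 'I_N) : {set V} := [set inl j; inr j].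

Lemma cycle_edge_inj : injective cycle_edge.
Proof.
move=> j k /setP ejk.
have := ejk (inl j); rewrite !inE !(inj_eq inl_inj) eqxx.
case/esym/orP => [/eqP //|/eqP jE].
have := ejk (inl (ordS j)); rewrite !inE !(inj_eq inl_inj) eqxx orbT.
case/esym/orP => [/eqP SjE|/eqP/ordS_inj //].
by have := ordS2_neq k; rewrite -jE SjE eqxx.
Qed.

Lemma whisker_edge_inj : injective whisker_edge.
Proof.
move=> j k /setP/(_ (inr j)).
by rewrite !inE /= !(inj_eq inr_inj) eqxx => /esym/eqP.
Qed.

Lemma cycle_edge_neq_whisker (j k : 'I_N) : cycle_edge j != whisker_edge k.
Proof. by apply/eqP => /setP/(_ (inr k)); rewrite !inE eqxx orbT. Qed.

Lemma cycle_adjE (i j : 'I_N) : cycle_adj N i j = (j == ordS i) || (i == ordS j).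
Proof. by []. Qed.

Lemma cycle_edge_in (j : 'I_N) : cycle_edge j \in edge_set _ WC.
Proof.
by apply/imset2P; exists (inl j) (inl (ordS j)); rewrite // inE /= cycle_adjE eqxx.
Qed.

Lemma whisker_edge_in (j : 'I_N) : whisker_edge j \in edge_set _ WC.
Proof. by apply/imset2P; exists (inl j) (inr j); rewrite // inE /= eqxx. Qed.

Lemma edge_setWC_cases e :
  e \in edge_set _ WC -> exists j, e = cycle_edge j \/ e = whisker_edge j.
Proof.
case/imset2P => -[u|u] [v|v] _; rewrite inE //= ?cycle_adjE => uv ->.
- case/orP: uv => /eqP->; first by exists u; left.
  by exists v; left; rewrite /cycle_edge finset.setUC.
- by move/eqP: uv => <-; exists u; right.
- by move/eqP: uv => <-; exists u; right; rewrite /whisker_edge finset.setUC.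
Qed.

Lemma mem_edge_inl (k : 'I_N) e : e \in edge_set _ WC ->
  (inl k \in e) =
  (e \in [:: cycle_edge (ord_pred k); whisker_edge k; cycle_edge k]).
Proof.
case/edge_setWC_cases => j [->|->]; rewrite !inE /= !(inj_eq inl_inj).
- rewrite !(inj_eq cycle_edge_inj) (negbTE (cycle_edge_neq_whisker _ _)).
  by rewrite -(can2_eq (@ordSK _) (@ord_predK _)) orFb orbC !(eq_sym k).
- rewrite (inj_eq whisker_edge_inj) !(eq_sym (whisker_edge j)).
  by rewrite !(negbTE (cycle_edge_neq_whisker _ _)) inl_eq_inr !orbF eq_sym.
Qed.

Lemma mem_edge_inr (k : 'I_N) e : e \in edge_set _ WC ->
  (inr k \in e) = (e \in [:: whisker_edge k]).
Proof.
case/edge_setWC_cases => j [->|->]; rewrite !inE /=.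
  by rewrite (negbTE (cycle_edge_neq_whisker _ _)).
by rewrite (inj_eq whisker_edge_inj) eq_sym.
Qed.

Lemma uniq_edges_at (k : 'I_N) :
  uniq [:: cycle_edge (ord_pred k); whisker_edge k; cycle_edge k].
Proof.
rewrite /= !inE !negb_or (inj_eq cycle_edge_inj) andbT.
have := ordS_neq (ord_pred k); rewrite ord_predK eq_sym => -> /=.
by rewrite cycle_edge_neq_whisker eq_sym cycle_edge_neq_whisker.
Qed.

Lemma M2_WCP (F : {set {set V}}) :
  reflect (F \subset edge_set _ WC /\
           forall j, ~~ [&& cycle_edge j \in F, whisker_edge (ordS j) \in F
                          & cycle_edge (ordS j) \in F])
          (F \in M2 _ WC).
Proof.
rewrite inE /two_matching; apply: (iffP andP) => -[FE degF]; split => //.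
- move=> j; have := forallP degF (inl (ordS j)).
  rewrite (card_sep_uniq (uniq_edges_at (ordS j))) ordSK /=.
    by case: (_ \in F); case: (_ \in F); case: (_ \in F).
  by move=> e /(fintype.subsetP FE)/(mem_edge_inl (ordS j)); rewrite ordSK.
- apply/forallP => -[k|k].
  + rewrite (card_sep_uniq (uniq_edges_at k)) /=.
      have := degF (ord_pred k); rewrite ord_predK.
      by case: (_ \in F); case: (_ \in F); case: (_ \in F).
    by move=> e /(fintype.subsetP FE); exact: mem_edge_inl.
  + rewrite (card_sep_uniq (s := [:: whisker_edge k])) //= ?addn0.
      by case: (_ \in F).
    by move=> e /(fintype.subsetP FE); exact: mem_edge_inr.
Qed.

End WhiskeredCycle.

Section SphereCoordinate.
Local Open Scope ring_scope.
Context {R : realDomainType} {n : nat}.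
Variables a b : 'I_n.+1 -> R.

Definition sphere_coord (i : 'I_n.+1) : R :=
  a i - b i - Num.min (a (ordS i)) (b (ordS i)).
Local Notation y := sphere_coord.

Hypotheses (a_ge0 : forall i, 0 <= a i) (b_ge0 : forall i, 0 <= b i).
Hypothesis triple_free :
  forall j, ~~ [&& a j != 0, b (ordS j) != 0 & a (ordS j) != 0].

Lemma sphere_coord_lt0 j :
  0 < a (ordS j) -> 0 < b (ordS j) -> a j = 0 /\ y j < 0.
Proof.
move=> aSj_gt0 bSj_gt0.
have aj0 : a j = 0.
  apply/eqP; move: (triple_free j); apply: contraNT => aj_neq0.
  by rewrite aj_neq0 (gt_eqF aSj_gt0) (gt_eqF bSj_gt0).
split => //; rewrite /y aj0.
have : 0 < Num.min (a (ordS j)) (b (ordS j)) by rewrite lt_min aSj_gt0 bSj_gt0.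
by have := b_ge0 j; lra.
Qed.

(* The three disjuncts describe the union of the supports of x and g (f x)
   on the three edges at vertex j + 1. *)
Lemma sphere_coord_triple_free j :
  ~~ [&& (a j != 0) || (0 < y j), (b (ordS j) != 0) || (y (ordS j) < 0)
       & (a (ordS j) != 0) || (0 < y (ordS j))].
Proof.
set k := ordS j; apply/and3P => -[supp_j supp_bk supp_ak].
have not_both : ~ (0 < a k /\ 0 < b k).
  move=> [ak_gt0 bk_gt0]; have [aj0 yj_lt0] := sphere_coord_lt0 j ak_gt0 bk_gt0.
  by move: supp_j; rewrite aj0 eqxx ltNge (ltW yj_lt0).
have min_ge0 : 0 <= Num.min (a (ordS k)) (b (ordS k)).
  by rewrite le_min a_ge0 b_ge0.
have ak_gt0 : 0 < a k.
  case/orP: supp_ak => [ak_neq0|]; first by rewrite lt_def ak_neq0 a_ge0.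
  by rewrite /y; have := b_ge0 k; lra.
have bk0 : b k = 0.
  apply/eqP; rewrite eq_le b_ge0 andbT leNgt; apply/negP => bk_gt0.
  exact: not_both.
have : 0 < Num.min (a (ordS k)) (b (ordS k)).
  by move: supp_bk; rewrite bk0 eqxx /= /y bk0; lra.
rewrite lt_min => /andP[aSk_gt0 bSk_gt0].
move: (triple_free k).
by rewrite (gt_eqF ak_gt0) (gt_eqF aSk_gt0) (gt_eqF bSk_gt0).
Qed.

Lemma sphere_coord_eq0 : (forall i, y i = 0) -> forall i, a i = 0 /\ b i = 0.
Proof.
move=> y0.
have min0 j : Num.min (a (ordS j)) (b (ordS j)) = 0.
  apply/eqP; rewrite eq_le le_min a_ge0 b_ge0 !andbT leNgt lt_min.
  apply/negP => /andP[aSj_gt0 bSj_gt0].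
  by have [_] := sphere_coord_lt0 j aSj_gt0 bSj_gt0; rewrite y0 ltxx.
have ab j : a j = b j by have := y0 j; rewrite /y min0; lra.
by move=> i; have := min0 (ord_pred i); rewrite ord_predK -ab minxx => ->.
Qed.

End SphereCoordinate.

Section PositiveNegativeParts.
Local Open Scope ring_scope.
Variable R : realDomainType.
Implicit Types u : R.

Lemma max0_ge0 u : 0 <= Num.max u 0.
Proof. by rewrite le_max lexx orbT. Qed.

Lemma max0_neq0 u : Num.max u 0 != 0 -> 0 < u.
Proof. by apply: contraNT; rewrite -leNgt => u_le0; rewrite max_r. Qed.

Lemma add_max0_maxN0 u : Num.max u 0 + Num.max (- u) 0 = `|u|.
Proof.
case: (leP 0 u) => u0; [rewrite ger0_norm // | rewrite ltr0_norm //].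
  by case: (leP 0 (- u)); lra.
by case: (leP 0 (- u)); lra.
Qed.

Lemma sub_max0_maxN0 u : Num.max u 0 - Num.max (- u) 0 = u.
Proof. by case: (leP 0 u) => ?; case: (leP 0 (- u)) => ?; lra. Qed.

Lemma min_max0_maxN0 u : Num.min (Num.max u 0) (Num.max (- u) 0) = 0.
Proof. by case: (leP 0 u) => ?; case: (leP 0 (- u)) => ?; case: leP => ?; lra. Qed.

End PositiveNegativeParts.

Section PointwiseContinuity.
Local Open Scope ring_scope.
Local Open Scope classical_set_scope.
Variable R : realType.

Lemma continuous_ptws (T : topologicalType) (I : choiceType)
    (h : T -> {ptws I -> R}) (x : T) :
  (forall i, {for x, continuous (fun p => h p i)}) -> {for x, continuous h}.
Proof.
move=> hc.
by apply: (proj2 (@pointwise_cvgP (discrete_topology I) R (h @ x) (h x) _)).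
Qed.

Lemma continuous_sum (T : topologicalType) (I : finType) (h : I -> T -> R)
    (x : T) :
  (forall i, {for x, continuous (h i)}) ->
  {for x, continuous (fun p => \sum_i h i p)}.
Proof.
by move=> hc; apply: cvg_big => [|i _]; [exact: add_continuous | exact: hc].
Qed.

End PointwiseContinuity.

Section HomotopyEquivalence.
Local Set Implicit Arguments.
Local Unset Strict Implicit.
Local Open Scope ring_scope.
Local Open Scope classical_set_scope.
Variables (R : realType) (n : nat).
Hypothesis n_gt1 : (1 < n)%N.
Local Notation N := n.+1.
Local Notation V := ('I_N + 'I_N)%type.
Local Notation WC := (whisker_adj _ (cycle_adj N)).
Local Notation X := {ptws {set V} -> R}.
Local Notation Y := {ptws 'I_N -> R}.
Local Notation A := (realization R _ (M2 _ WC)).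
Local Notation S := (unit_sphere R n).
Local Notation cycle_weight x := (fun i => x (cycle_edge i)).
Local Notation whisker_weight x := (fun i => x (whisker_edge i)).

Lemma realizationP (x : X) : A x <->
  [/\ forall e, 0 <= x e, \sum_e x e = 1,
      forall e, x e != 0 -> e \in edge_set _ WC &
      forall j, ~~ [&& x (cycle_edge j) != 0, x (whisker_edge (ordS j)) != 0
                     & x (cycle_edge (ordS j)) != 0]].
Proof.
split => [[x_ge0 [sum_x /(M2_WCP n_gt1) [xE xT]]]|[x_ge0 sum_x xE xT]].
  split => // [e xe|j]; first by apply: (fintype.subsetP xE); rewrite inE.
  by have := xT j; rewrite !inE.
do 2!split => //; apply/(M2_WCP n_gt1); split => [|j].
  by apply/fintype.subsetP => e; rewrite inE; exact: xE.
by rewrite !inE; exact: xT.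
Qed.

Definition sphere_coords (x : X) : 'I_N -> R :=
  sphere_coord (cycle_weight x) (whisker_weight x).
Definition l1norm (z : 'I_N -> R) : R := \sum_i `|z i|.
Definition l2norm (z : 'I_N -> R) : R := Num.sqrt (\sum_i z i ^+ 2).

Definition to_sphere (x : X) : Y :=
  fun j => sphere_coords x j / l2norm (sphere_coords x).

(* Indicators rather than a case split on e keep every coordinate an explicit
   continuous expression in z. *)
Definition from_sphere (z : Y) : X := fun e =>
  (\sum_j ((e == cycle_edge j)%:R * Num.max (z j) 0
           + (e == whisker_edge j)%:R * Num.max (- z j) 0)) / l1norm z.

Definition line_homotopy (p : R * X) : X := fun e =>
  (1 - p.1) * from_sphere (to_sphere p.2) e + p.1 * p.2 e.

Lemma from_sphere_cycle z k :
  from_sphere z (cycle_edge k) = Num.max (z k) 0 / l1norm z.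
Proof.
rewrite /from_sphere (bigD1 k) //= eqxx (negbTE (cycle_edge_neq_whisker _ _)).
rewrite mul1r mul0r addr0 big1 ?addr0 // => j jk.
rewrite (inj_eq (cycle_edge_inj n_gt1)) (eq_sym k) (negbTE jk).
by rewrite (negbTE (cycle_edge_neq_whisker _ _)) !mul0r addr0.
Qed.

Lemma from_sphere_whisker z k :
  from_sphere z (whisker_edge k) = Num.max (- z k) 0 / l1norm z.
Proof.
rewrite /from_sphere (bigD1 k) //= eqxx eq_sym (negbTE (cycle_edge_neq_whisker _ _)).
rewrite mul1r mul0r add0r big1 ?addr0 // => j jk.
rewrite (inj_eq whisker_edge_inj) (eq_sym k) (negbTE jk).
by rewrite eq_sym (negbTE (cycle_edge_neq_whisker _ _)) !mul0r addr0.
Qed.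

Lemma from_sphere_supp z e : from_sphere z e != 0 -> e \in edge_set _ WC.
Proof.
apply: contraR => eNE; apply/eqP; rewrite /from_sphere big1 ?mul0r // => j _.
have /negbTE-> : e != cycle_edge j.
  by apply: contraNneq eNE => ->; exact: cycle_edge_in.
have /negbTE-> : e != whisker_edge j.
  by apply: contraNneq eNE => ->; exact: whisker_edge_in.
by rewrite !mul0r addr0.
Qed.

Lemma l1norm_ge0 z : 0 <= l1norm z.
Proof. by apply: sumr_ge0 => i _; exact: normr_ge0. Qed.

Lemma l1norm_neq0 z : S z -> l1norm z != 0.
Proof.
rewrite /unit_sphere /= => sum_z; apply/eqP => /eqP.
rewrite psumr_eq0 => [/allP z0|i _]; last exact: normr_ge0.
move: sum_z; rewrite big1 => [/esym/eqP|i _]; first by rewrite oner_eq0.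
by have := z0 i (mem_index_enum i); rewrite normr_eq0 => /eqP ->; rewrite expr0n.
Qed.

Lemma from_sphere_ge0 z e : 0 <= from_sphere z e.
Proof.
apply: divr_ge0; last exact: l1norm_ge0.
by apply: sumr_ge0 => j _; apply: addr_ge0; apply: mulr_ge0; rewrite ?max0_ge0.
Qed.

Lemma sum_from_sphere z : l1norm z != 0 -> \sum_e from_sphere z e = 1.
Proof.
move=> z_neq0; rewrite /from_sphere -mulr_suml exchange_big /=.
under eq_bigr do rewrite big_split /= !sum_indicator_mul add_max0_maxN0.
exact: divff.
Qed.

Lemma from_sphere_in z : S z -> A (from_sphere z).
Proof.
move=> Sz; apply/realizationP; split.
- exact: from_sphere_ge0.
- exact/sum_from_sphere/l1norm_neq0.
- exact: from_sphere_supp.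
- move=> j; rewrite from_sphere_whisker !from_sphere_cycle !mulf_eq0 !negb_or.
  apply/negP => /and3P[_ /andP[/max0_neq0 zSj_lt0 _] /andP[/max0_neq0 zSj_gt0 _]].
  lra.
Qed.

Lemma to_from_sphere z : S z -> to_sphere (from_sphere z) = z.
Proof.
move=> Sz; have z_gt0 : 0 < l1norm z by rewrite lt_def l1norm_neq0 ?l1norm_ge0.
have sphere_coordsE j : sphere_coords (from_sphere z) j = z j / l1norm z.
  rewrite /sphere_coords /sphere_coord !from_sphere_cycle !from_sphere_whisker.
  rewrite -minr_pMl ?invr_ge0 ?ltW // min_max0_maxN0 mul0r subr0.
  by rewrite -mulrBl sub_max0_maxN0.
have l2normE : l2norm (sphere_coords (from_sphere z)) = (l1norm z)^-1.
  rewrite /l2norm; under eq_bigr do rewrite sphere_coordsE expr_div_n.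
  move: Sz; rewrite -mulr_suml /unit_sphere /= => ->.
  by rewrite mul1r -exprVn sqrtr_sqr ger0_norm // invr_ge0 ltW.
by apply/funext => j; rewrite /to_sphere l2normE sphere_coordsE invrK mulfVK ?gt_eqF.
Qed.

Lemma sum_sphere_coords2_gt0 x : A x -> 0 < \sum_i sphere_coords x i ^+ 2.
Proof.
case/realizationP => x_ge0 sum_x xE xT.
rewrite lt_def sumr_ge0 ?andbT => [|i _]; last exact: sqr_ge0.
apply/eqP => /eqP; rewrite psumr_eq0 => [/allP sq0|i _]; last exact: sqr_ge0.
have sphere_coords_eq0 i : sphere_coords x i = 0.
  by have := sq0 i (mem_index_enum i); rewrite sqrf_eq0 => /eqP.
have weights0 := sphere_coord_eq0 (cycle_weight x) (whisker_weight x)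
  (fun i => x_ge0 _) (fun i => x_ge0 _) xT sphere_coords_eq0.
move: sum_x; rewrite big1 => [/esym/eqP|e _]; first by rewrite oner_eq0.
have [//|xe_neq0] := eqVneq (x e) 0.
by have [j [->|->]] := edge_setWC_cases e (xE e xe_neq0); have [] := weights0 j.
Qed.

Lemma l2norm_sphere_coords_gt0 x : A x -> 0 < l2norm (sphere_coords x).
Proof. by move=> Ax; rewrite sqrtr_gt0 sum_sphere_coords2_gt0. Qed.

Lemma to_sphere_in x : A x -> S (to_sphere x).
Proof.
move=> Ax; have sum_gt0 := sum_sphere_coords2_gt0 Ax.
rewrite /unit_sphere /= /to_sphere; under eq_bigr do rewrite expr_div_n.
by rewrite -mulr_suml /l2norm sqr_sqrtr ?ltW // divff ?gt_eqF.
Qed.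

Lemma from_sphere_cycle_neq0 z k : from_sphere z (cycle_edge k) != 0 -> 0 < z k.
Proof. by rewrite from_sphere_cycle mulf_eq0 negb_or => /andP[/max0_neq0]. Qed.

Lemma from_sphere_whisker_neq0 z k :
  from_sphere z (whisker_edge k) != 0 -> z k < 0.
Proof.
by rewrite from_sphere_whisker mulf_eq0 negb_or -oppr_gt0 => /andP[/max0_neq0].
Qed.

Lemma to_sphere_gt0 x k : A x -> (0 < to_sphere x k) = (0 < sphere_coords x k).
Proof.
by move=> Ax; rewrite /to_sphere pmulr_lgt0 // invr_gt0 l2norm_sphere_coords_gt0.
Qed.

Lemma to_sphere_lt0 x k : A x -> (to_sphere x k < 0) = (sphere_coords x k < 0).
Proof.
by move=> Ax; rewrite /to_sphere pmulr_llt0 // invr_gt0 l2norm_sphere_coords_gt0.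
Qed.

Lemma line_homotopy_in t x : 0 <= t <= 1 -> A x -> A (line_homotopy (t, x)).
Proof.
move=> /andP[t_ge0 t_le1] Ax; have /realizationP[x_ge0 sum_x xE xT] := Ax.
set g := from_sphere (to_sphere x).
have supp e : line_homotopy (t, x) e != 0 -> (g e != 0) || (x e != 0).
  apply: contraR; rewrite negb_or => /andP[/negPn/eqP g0 /negPn/eqP x0].
  by rewrite /line_homotopy /= -/g g0 x0 !mulr0 addr0.
have cycle_pos k : g (cycle_edge k) != 0 -> 0 < sphere_coords x k.
  by move/from_sphere_cycle_neq0; rewrite to_sphere_gt0.
have whisker_neg k : g (whisker_edge k) != 0 -> sphere_coords x k < 0.
  by move/from_sphere_whisker_neq0; rewrite to_sphere_lt0.
apply/realizationP; split.
- move=> e; apply: addr_ge0; apply: mulr_ge0 => //; last exact: from_sphere_ge0.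
  by rewrite subr_ge0.
- rewrite big_split /= -2!mulr_sumr sum_x.
  by rewrite (sum_from_sphere (l1norm_neq0 (to_sphere_in Ax))) !mulr1 subrK.
- by move=> e /supp /orP[/from_sphere_supp|/xE].
- move=> j; apply: contra (sphere_coord_triple_free
    (cycle_weight x) (whisker_weight x) (fun i => x_ge0 _) (fun i => x_ge0 _) xT j).
  case/and3P => /supp c1 /supp w2 /supp c2; apply/and3P; split.
  + by case/orP: c1 => [/cycle_pos ->|->]; rewrite ?orbT.
  + by case/orP: w2 => [/whisker_neg ->|->]; rewrite ?orbT.
  + by case/orP: c2 => [/cycle_pos ->|->]; rewrite ?orbT.
Qed.

Lemma sphere_coords_continuous j (x : X) :
  {for x, continuous (fun p : X => sphere_coords p j)}.
Proof.
rewrite /sphere_coords /sphere_coord.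
apply: continuousB; first apply: continuousB.
all: try apply: continuous_min; exact: proj_continuous.
Qed.

Lemma l2norm_sphere_coords_continuous (x : X) :
  {for x, continuous (fun p : X => l2norm (sphere_coords p))}.
Proof.
apply: (@continuous_comp _ _ _ (fun p : X => \sum_i sphere_coords p i ^+ 2)
  Num.sqrt).
  apply: continuous_sum => i.
  apply: (@continuous_comp _ _ _ (fun p : X => sphere_coords p i)
    (@GRing.exp R ^~ 2)).
    exact: sphere_coords_continuous.
  exact: exprn_continuous.
exact: sqrt_continuous.
Qed.

Lemma to_sphere_continuous x : A x -> {for x, continuous to_sphere}.
Proof.
move=> Ax; apply: continuous_ptws => j.
apply: continuousM; first exact: sphere_coords_continuous.
apply: continuousV; last exact: l2norm_sphere_coords_continuous.
exact: lt0r_neq0 (l2norm_sphere_coords_gt0 Ax).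
Qed.

Lemma from_sphere_continuous z : l1norm z != 0 -> {for z, continuous from_sphere}.
Proof.
move=> z_neq0; apply: continuous_ptws => e; apply: continuousM.
  apply: continuous_sum => j; apply: continuousD; apply: continuousM.
  - exact: cst_continuous.
  - by apply: continuous_max; [exact: proj_continuous | exact: cst_continuous].
  - exact: cst_continuous.
  - apply: continuous_max; last exact: cst_continuous.
    by apply: continuousN; exact: proj_continuous.
apply: continuousV; first exact: z_neq0.
apply: continuous_sum => i.
apply: (@continuous_comp _ _ _ (fun p : Y => p i) Num.norm).
  exact: proj_continuous.
exact: (@norm_continuous R R^o).
Qed.

Lemma line_homotopy_continuous p : A p.2 -> {for p, continuous line_homotopy}.
Proof.
move=> Ap; apply: continuous_ptws => e.
have gf_continuous :
    {for p.2, continuous (fun x : X => from_sphere (to_sphere x) e)}.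
  apply: (@continuous_comp _ _ _ to_sphere (fun z : Y => from_sphere z e)).
    exact: to_sphere_continuous.
  apply: (@continuous_comp _ _ _ from_sphere (fun g : X => g e)).
    exact/from_sphere_continuous/l1norm_neq0/to_sphere_in.
  exact: proj_continuous.
apply: continuousD; apply: continuousM.
- by apply: continuousB; [exact: cst_continuous | exact: cvg_fst].
- apply: (@continuous_comp _ _ _ snd (fun x : X => from_sphere (to_sphere x) e)).
    exact: cvg_snd.
  exact: gf_continuous.
- exact: cvg_fst.
- apply: (@continuous_comp _ _ _ snd (fun x : X => x e)); first exact: cvg_snd.
  exact: proj_continuous.
Qed.

Theorem homotopy_equivalent_M2_whiskered_cycle : homotopy_equivalent R _ _ A S.
Proof.
exists to_sphere, from_sphere; split; [|split; [|split; [|split; [|split]]]].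
- apply: continuous_in_subspaceT => x; rewrite in_setE.
  exact: to_sphere_continuous.
- by move=> _ [x Ax <-]; exact: to_sphere_in.
- apply: continuous_in_subspaceT => z; rewrite in_setE => Sz.
  exact/from_sphere_continuous/l1norm_neq0.
- by move=> _ [z Sz <-]; exact: from_sphere_in.
- exists line_homotopy; split; [|split].
  + apply: continuous_in_subspaceT => p; rewrite in_setE => -[_].
    exact: line_homotopy_continuous.
  + by move=> t x; exact: line_homotopy_in.
  + move=> x _; split; apply/funext => e; rewrite /line_homotopy /=.
      by rewrite subr0 mul1r mul0r addr0.
    by rewrite subrr mul0r add0r mul1r.
- exists snd; split; [|split].
  + by apply: continuous_subspaceT => p; exact: cvg_snd.
  + by [].
  + by move=> z Sz; rewrite /= to_from_sphere.
Qed.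

End HomotopyEquivalence.

Theorem mainTheorem8 (R : realType) (m : nat) : (3 <= m)%N ->
  homotopy_equivalent R _ _
    (realization R _ (M2 _ (WC_adj m)))
    (unit_sphere R (2 * m).-1).
Proof.
(* [WC_adj m] lives on [(2 * m).-1.+1] vertices, which is convertible to
   [2 * m] only once [m] is a successor. *)
case: m => [|[|[|k]]] // _.
exact: (@homotopy_equivalent_M2_whiskered_cycle R (2 * k.+3).-1 isT).
Qed.
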